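(* Let $((G_n)_{n\in\mathbb{N}},(\rho_n)_{n\in\mathbb{N}},(\kappa_k^n)_{k\le n})$ be a $d$-ary cloning system, $n\in\mathbb{N}$, $g\in G_n$. For any $m\ge 2$ and natural numbers $k_1,\dots,k_m$ with $k_i\in\{1,\dots,n+(i-1)(d-1)\}$, $$\Big[(g)\big(\kappa_{k_1}^n\circ\kappa_{k_2}^{n+d-1}\circ\cdots\circ\kappa_{k_m}^{n+(m-1)(d-1)}\big)\Big]^{-1}=(g^{-1})\big(\kappa_{\alpha_1}^n\circ\kappa_{\alpha_2}^{n+d-1}\circ\cdots\circ\kappa_{\alpha_m}^{n+(m-1)(d-1)}\big),$$ where $\alpha_1=\rho_n(g)k_1$ and, for $i=2,\dots,m$, $\alpha_i=\rho_{n+(i-1)(d-1)}\Big((g)\big(\kappa_{k_1}^n\circ\kappa_{k_2}^{n+d-1}\circ\cdots\circ\kappa_{k_{i-1}}^{n+(i-2)(d-1)}\big)\Big)k_i$.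
   Context: Fix $d\ge 2$. Standard cloning maps: for $\sigma\in S_n$, $1\le k\le n$, partition $\{1,\dots,n+d-1\}$ into consecutive blocks $B^{(k)}_j=\{j\}$ ($j<k$), $B^{(k)}_k=\{k,\dots,k+d-1\}$, $B^{(k)}_j=\{j+d-1\}$ ($j>k$); $(\sigma)\varsigma_k^n\in S_{n+d-1}$ maps $B^{(k)}_j$ onto $B^{(\sigma(k))}_{\sigma(j)}$ order-preservingly. A $d$-ary cloning system consists of groups $(G_n)_{n\in\mathbb{N}}$, homomorphisms $\rho_n:G_n\to S_n$, and injective functions (not necessarily homomorphisms) $\kappa_k^n:G_n\to G_{n+d-1}$, $1\le k\le n$, written on the right, with composition convention $(g)(\kappa\circ\kappa'):=((g)\kappa)\kappa'$, such that for $1\le k<\ell\le n$ and $g,h\in G_n$: (C1) $(gh)\kappa_k^n=(g)\kappa^n_{\rho_n(h)k}\,(h)\kappa_k^n$; (C2) $\kappa_\ell^n\circ\kappa_k^{n+d-1}=\kappa_k^n\circ\kappa_{\ell+d-1}^{n+d-1}$; (C3) $\rho_{n+d-1}((g)\kappa_k^n)(i)=((\rho_n(g))\varsigma_k^n)(i)$ for $i\notin\{k,\dots,k+d-1\}$. (Axiom (C1) is understood to hold for all $1\le k\le n$.) *)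

(* A d-ary cloning system with (possibly infinite) groups G_n,
   carried by an explicit record of group data and axioms. *)
From mathcomp Require Import all_boot all_fingroup.
Set Implicit Arguments.
Unset Strict Implicit.
Unset Printing Implicit Defensive.

(* 1-based application of a permutation s of {1,...,n} (stored as s : {perm 'I_n},
   where ordinal i stands for i+1) to a natural number k; identity outside 1..n. *)
Definition papp (n : nat) (s : {perm 'I_n}) (k : nat) : nat :=
  if k is k'.+1 then
    match (insub k' : option 'I_n) with Some i => (s i).+1 | None => k end
  else k.

(* Standard cloning map (sigma) varsigma_k^n, as a map on {1,...,n+d-1}.
   blk d k i = (j, o): position i lies in block B^{(k)}_j at offset o.
   bstart d k j = first element of B^{(k)}_j. *)
Definition blk (d k i : nat) : nat * nat :=
  if i < k then (i, 0)
  else if i < k + d then (k, i - k)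
  else (i - (d - 1), 0).

Definition bstart (d k j : nat) : nat :=
  if j < k then j else if j == k then k else j + (d - 1).

Definition varsigma (d : nat) (sigma : nat -> nat) (k i : nat) : nat :=
  let (j, o) := blk d k i in bstart d (sigma k) (sigma j) + o.

(* d-ary cloning system.  kappa n k is kappa_k^n (1-based k); its values for k
   outside 1..n are irrelevant (no axiom constrains them). *)
Unset Implicit Arguments.
Record cloning_system (d : nat) := CloningSystem {
  G : nat -> Type;
  cmul : forall n, G n -> G n -> G n;
  cone : forall n, G n;
  cinv : forall n, G n -> G n;
  mulA : forall n (x y z : G n), @cmul n (@cmul n x y) z = @cmul n x (@cmul n y z);
  mul1g : forall n (x : G n), @cmul n (@cone n) x = x;
  mulg1 : forall n (x : G n), @cmul n x (@cone n) = x;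
  mulVg : forall n (x : G n), @cmul n (@cinv n x) x = @cone n;
  mulgV : forall n (x : G n), @cmul n x (@cinv n x) = @cone n;
  crho : forall n, G n -> {perm 'I_n};
  (* rho_n is a homomorphism into S_n (composition of maps, right-to-left) *)
  rhoM : forall n (g h : G n) (x : 'I_n), @crho n (@cmul n g h) x = @crho n g (@crho n h x);
  kappa : forall n, nat -> G n -> G (n + (d - 1));
  kappa_inj : forall n k, 1 <= k <= n -> injective (@kappa n k);
  C1 : forall n k (g h : G n), 1 <= k <= n ->
        @kappa n k (@cmul n g h) =
        @cmul (n + (d - 1)) (@kappa n (papp (@crho n h) k) g) (@kappa n k h);
  C2 : forall n k l (g : G n), 1 <= k -> k < l -> l <= n ->
        @kappa (n + (d - 1)) k (@kappa n l g) =
        @kappa (n + (d - 1)) (l + (d - 1)) (@kappa n k g);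
  C3 : forall n k (g : G n) i, 1 <= k <= n -> 1 <= i <= n + (d - 1) ->
        ~~ (k <= i < k + d) ->
        papp (@crho (n + (d - 1)) (@kappa n k g)) i = varsigma d (papp (@crho n g)) k i
}.
Set Implicit Arguments.
Arguments G {d} _ _.
Arguments cmul {d} _ {n} _ _.
Arguments cone {d} _ {n}.
Arguments cinv {d} _ {n} _.
Arguments crho {d} _ {n} _.
Arguments kappa {d} _ {n} _ _.

Fixpoint lvl (d n m : nat) : nat :=
  match m with 0 => n | m'.+1 => lvl d (n + (d - 1)) m' end.

(* kseq C n m ks g = (g)(kappa_{ks 0}^n o kappa_{ks 1}^{n+d-1} o ... o kappa_{ks (m-1)}) *)
Fixpoint kseq (d : nat) (C : cloning_system d) (n m : nat) (ks : nat -> nat)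
  : G C n -> G C (lvl d n m) :=
  match m return G C n -> G C (lvl d n m) with
  | 0 => fun g => g
  | m'.+1 => fun g => @kseq d C (n + (d - 1)) m' (fun i => ks i.+1) (@kappa d C n (ks 0) g)
  end.

(* alphas C n m ks g i = alpha_{i+1} of the paper (0-based position i) *)
Fixpoint alphas (d : nat) (C : cloning_system d) (n m : nat) (ks : nat -> nat)
  (g : G C n) : nat -> nat :=
  match m with
  | 0 => fun _ => 0
  | m'.+1 => fun i =>
      match i with
      | 0 => papp (@crho d C n g) (ks 0)
      | i'.+1 => @alphas d C (n + (d - 1)) m' (fun j => ks j.+1) (@kappa d C n (ks 0) g) i'
      end
  end.

From Pilot Require Import Defs.
From mathcomp Require Import all_boot all_fingroup.

(* Axiom (C1) for the product g^-1 g gives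
   kappa_k(1) = kappa_{rho(g) k}(g^-1) kappa_k(g), and kappa_k(1) = 1 because
   (C1) for 1 * 1 shows it is idempotent.  Hence the inverse of one cloning of g
   is the cloning of g^-1 at the moved index rho(g) k, and the iterated formula
   follows by induction on the number of clonings, applying this one step at
   the current level. *)

Lemma papp1 n k : papp (1 : {perm 'I_n}) k = k.
Proof. by case: k => //= k; case: insubP => //= i _ <-; rewrite perm1. Qed.

Section CloningSystem.
Variables (d : nat) (C : cloning_system d).

Lemma cmul_idem_eq1 n (x : G C n) : cmul C x x = x -> x = cone C.
Proof.
move=> xx; have := f_equal (fun y => cmul C y (cinv C x)) xx.
by rewrite Defs.mulA !Defs.mulgV Defs.mulg1.
Qed.

Lemma crho1 n : crho C (cone C (n := n)) = 1%g.
Proof.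
apply/permP => x; rewrite perm1; apply: (@perm_inj _ (crho C (cone C))).
by rewrite -rhoM Defs.mul1g.
Qed.

Lemma kappa1 n k : 1 <= k <= n -> kappa C k (cone C (n := n)) = cone C.
Proof.
move=> kn; apply: cmul_idem_eq1.
by rewrite -{3}(@Defs.mul1g _ C _ (cone C)) C1 // crho1 papp1.
Qed.

Lemma kappaV n k (g : G C n) : 1 <= k <= n ->
  cinv C (kappa C k g) = kappa C (papp (crho C g) k) (cinv C g).
Proof.
move=> kn; have := @C1 _ C _ _ (cinv C g) g kn.
rewrite Defs.mulVg kappa1 // => one_eq.
have := f_equal (fun y => cmul C y (cinv C (kappa C k g))) one_eq.
by rewrite Defs.mul1g Defs.mulA Defs.mulgV Defs.mulg1.
Qed.

Lemma cinv_kseq m n (ks : nat -> nat) (g : G C n) :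
  (forall i, i < m -> 1 <= ks i <= n + i * (d - 1)) ->
  cinv C (kseq m ks g) = kseq m (alphas m ks g) (cinv C g).
Proof.
elim: m n ks g => [//|m IHm] n ks g ks_bound /=.
rewrite IHm => [|i im]; first by rewrite kappaV // -(addn0 n) (ks_bound 0).
by rewrite -addnA -mulSn ks_bound.
Qed.

End CloningSystem.

Theorem mainTheorem8 (d : nat) (hd : 2 <= d) (C : cloning_system d)
  (n : nat) (g : G C n) (m : nat) (ks : nat -> nat) :
  2 <= m ->
  (forall i, i < m -> 1 <= ks i <= n + i * (d - 1)) ->
  cinv C (@kseq d C n m ks g) =
  @kseq d C n m (@alphas d C n m ks g) (cinv C g).
Proof. by move=> _; apply: cinv_kseq. Qed.
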